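(* Let $C$ be a coalgebra over a field $\Bbbk$ and $C^*$ its dual (convolution) algebra. Every left annihilator in $C^*$, i.e. every set of the form $I=\{f\in C^*\mid f\cdot h=0\ \forall h\in H\}$ for some subset $H\subseteq C^*$, is closed in the finite topology of $C^*$.
   Context: For a coalgebra $C$, $C^*$ is an algebra with convolution product $(f\cdot h)(c)=\sum f(c_1)h(c_2)$ (Sweedler notation). For a subspace $X\subseteq C$ let $X^\perp=\{f\in C^*\mid f(X)=0\}$, and for $Y\subseteq C^*$ let $Y^\perp=\{c\in C\mid f(c)=0\ \forall f\in Y\}$. The finite topology on $C^*$ is the topology whose closed subspaces are those $W\subseteq C^*$ with $W=W^{\perp\perp}$, equivalently those of the form $X^\perp$ for a subspace $X\subseteq C$. *)

From HB Require Import structures.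
From mathcomp Require Import all_boot all_order all_algebra.
Set Implicit Arguments. Unset Strict Implicit. Unset Printing Implicit Defensive.
Import GRing.Theory.
Local Open Scope ring_scope.

Section Coalg.
Variables (k : fieldType) (C : lmodType k).

Definition lin_functional (f : C -> k) : Prop :=
  forall (a : k) (x y : C), f (a *: x + y) = a * f x + f y.

(* A representative of Delta(c) in C (x) C, as a finite sum of pure tensors
   c = \sum c_(1) (x) c_(2) (Sweedler notation). *)
Definition sweedler := C -> seq (C * C).

Definition pair2 (delta : sweedler) (f g : C -> k) (c : C) : k :=
  \sum_(p <- delta c) f p.1 * g p.2.

Record coalgebra := Coalgebra {
  delta : sweedler;
  eps : C -> k;
  eps_lin : lin_functional eps;
  (* Delta is linear (well defined as a map C -> C (x) C); since functionals
     f (x) g separate points of C (x) C over a field, this is tested on them *)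
  delta_lin : forall f g, lin_functional f -> lin_functional g ->
     lin_functional (pair2 delta f g);
  (* coassociativity (Delta (x) id) Delta = (id (x) Delta) Delta, tested on
     f (x) g (x) h, which separate points of C (x) C (x) C *)
  coassoc : forall f g h, lin_functional f -> lin_functional g ->
     lin_functional h -> forall c,
     \sum_(p <- delta c) pair2 delta f g p.1 * h p.2 =
     \sum_(p <- delta c) f p.1 * pair2 delta g h p.2;
  counitl : forall c, \sum_(p <- delta c) eps p.1 *: p.2 = c;
  counitr : forall c, \sum_(p <- delta c) eps p.2 *: p.1 = c
}.

Definition conv (D : coalgebra) (f h : C -> k) : C -> k :=
  pair2 (delta D) f h.

Definition perpD (X : C -> Prop) : (C -> k) -> Prop :=
  fun f => lin_functional f /\ forall c, X c -> f c = 0.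

Definition perpC (Y : (C -> k) -> Prop) : C -> Prop :=
  fun c => forall f, Y f -> f c = 0.

(* W subset of C^* is closed in the finite topology iff W = W^perp perp *)
Definition finite_closed (W : (C -> k) -> Prop) : Prop :=
  forall f, W f <-> perpD (perpC W) f.

Definition left_ann (D : coalgebra) (H : (C -> k) -> Prop) : (C -> k) -> Prop :=
  fun f => lin_functional f /\ forall h, H h -> forall c, conv D f h c = 0.

End Coalg.

(* The convolution f . h evaluated at c is f applied to the vector
   [hit h c] = \sum h(c_2) c_1 (the hit action of C^* on C), so the left
   annihilator of H is X^perp for X = { hit h c | h in H, c in C }. Every set of the
   form X^perp is closed: it is contained in its bi-annihilator, and any f
   in X^perp^perp^perp kills X because X is contained in X^perp^perp. *)
From mathcomp Require Import all_boot all_order all_algebra.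
Set Implicit Arguments. Unset Strict Implicit. Unset Printing Implicit Defensive.
Import GRing.Theory.
Local Open Scope ring_scope.

Section LinearFunctional.
Variables (k : fieldType) (C : lmodType k).

Lemma lin_functional0 (f : C -> k) : lin_functional f -> f 0 = 0.
Proof.
move=> Lf; have := Lf 1 0 0; rewrite scaler0 addr0 mul1r => E.
by apply: (@addrI _ (f 0)); rewrite -E addr0.
Qed.

Lemma lin_functional_sum (f : C -> k) (T : Type) (s : seq T)
    (a : T -> k) (v : T -> C) :
  lin_functional f -> f (\sum_(p <- s) a p *: v p) = \sum_(p <- s) a p * f (v p).
Proof.
move=> Lf; elim: s => [|x s IHs]; first by rewrite !big_nil lin_functional0.
by rewrite !big_cons Lf IHs.
Qed.

Lemma perpD_closed (X : C -> Prop) : finite_closed (perpD X).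
Proof.
move=> f; split=> [Xf | [Lf Pf]].
  by split=> [|c]; [case: Xf | apply].
by split=> // c Xc; apply: Pf => g [_ Xg]; apply: Xg.
Qed.

Lemma finite_closed_ext (V W : (C -> k) -> Prop) :
  (forall f, V f <-> W f) -> finite_closed W -> finite_closed V.
Proof.
move=> eqVW clW f.
have eq_perp c : perpC V c <-> perpC W c.
  by split=> Pc g /eqVW; apply: Pc.
split=> [/eqVW/clW [Lf Pf] | [Lf Pf]].
  by split=> // c /eq_perp; apply: Pf.
by apply/eqVW/clW; split=> // c /eq_perp; apply: Pf.
Qed.

End LinearFunctional.

Section Coalgebra.
Variables (k : fieldType) (C : lmodType k) (D : coalgebra C).

Definition hit (h : C -> k) (c : C) : C := \sum_(p <- delta D c) h p.2 *: p.1.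

Lemma conv_hit (f h : C -> k) (c : C) :
  lin_functional f -> conv D f h c = f (hit h c).
Proof.
move=> Lf; rewrite /hit lin_functional_sum //.
by apply: eq_bigr => p _; rewrite mulrC.
Qed.

Lemma left_ann_perpD (H : (C -> k) -> Prop) (f : C -> k) :
  left_ann D H f <-> perpD (fun x => exists h c, H h /\ x = hit h c) f.
Proof.
split=> [[Lf Af] | [Lf Pf]]; split=> //.
  by move=> _ [h [c [Hh ->]]]; rewrite -conv_hit // Af.
by move=> h Hh c; rewrite conv_hit // Pf //; exists h, c.
Qed.

End Coalgebra.

Theorem proposition3p1 (k : fieldType) (C : lmodType k) (D : coalgebra C)
  (H : (C -> k) -> Prop) (HH : forall h, H h -> lin_functional h) :
  finite_closed (left_ann D H).
Proof.
apply: (finite_closed_ext (left_ann_perpD D H)).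
exact: perpD_closed.
Qed.
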